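(* Let $\mathcal{P}_1,\dots,\mathcal{P}_k$ be finite posets and $\mathbf{T}\in\mathbb{R}^{\mathcal{P}_1\times\cdots\times\mathcal{P}_k}$. If $\mathbf{T}$ has an optimal unconstrained rank-$r$ approximation $\mathbf{T}^{(r)}$, i.e. a minimizer of $\Vert\mathbf{T}-\boldsymbol\theta\Vert_F^2$ over all tensors $\boldsymbol\theta$ of (real CP) rank at most $r$, and $\mathbf{T}^{(r)}\in\mathcal{N}_{\le r}$, then $\mathbf{T}^{(r)}$ is a minimizer of $\Vert\mathbf{T}-\boldsymbol\theta\Vert_F^2$ over $\boldsymbol\theta\in\mathcal{N}_{\le r}$. For matrices ($k=2$), if the best rank-at-most-two approximation $\mathbf{T}^{(2)}$ satisfies $\mathbf{T}^{(2)}\in\mathcal{N}_{<\infty}$, then $\mathbf{T}^{(2)}$ is a minimizer of $\Vert\mathbf{T}-\boldsymbol\theta\Vert_F^2$ over $\boldsymbol\theta\in\mathcal{N}_{\le 2}$.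
   Context: For a finite poset $\mathcal{Q}$, the order cone $\mathcal{C}(\mathcal{Q})$ is the set of $\mathbf{f}\in\mathbb{R}^{\mathcal{Q}}$ with $f_x\ge0$ for all $x$ and $f_x\le f_y$ whenever $x\preceq y$. $\mathcal{N}_{\le r}$ is the set of tensors of the form $\sum_{i=1}^r\otimes_{j=1}^k\mathbf{v}^{(ij)}$ with $\mathbf{v}^{(ij)}\in\mathcal{C}(\mathcal{P}_j)$, and $\mathcal{N}_{<\infty}=\bigcup_r\mathcal{N}_{\le r}$. The real (CP) rank of a tensor is the minimal number of real rank-one tensors $\otimes_j\mathbf{v}^{(j)}$ summing to it. $\Vert\cdot\Vert_F$ is the Frobenius norm. *)

From HB Require Import structures.
From mathcomp Require Import all_boot all_order all_algebra.
From mathcomp Require Import reals.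
Set Implicit Arguments. Unset Strict Implicit. Unset Printing Implicit Defensive.
Import Order.TTheory GRing.Theory Num.Theory.
Local Open Scope ring_scope.

Section Tensors.
Variable R : realType.
Variable k : nat.
Variable d : 'I_k -> Order.disp_t.
Variable P : forall j : 'I_k, finPOrderType (d j).

Definition tidx := {dffun forall j : 'I_k, P j}.
Definition tensor := tidx -> R.

Definition order_cone (j : 'I_k) (f : P j -> R) : Prop :=
  (forall x, 0 <= f x) /\ (forall x y : P j, (x <= y)%O -> f x <= f y).

Definition outer (v : forall j : 'I_k, P j -> R) : tensor :=
  fun i => \prod_(j < k) v j (i j).

Definition rank_le (r : nat) (th : tensor) : Prop :=
  exists s : nat, (s <= r)%N /\
  exists v : 'I_s -> forall j : 'I_k, P j -> R,
    forall i, th i = \sum_(l < s) outer (v l) i.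

Definition N_le (r : nat) (th : tensor) : Prop :=
  exists v : 'I_r -> forall j : 'I_k, P j -> R,
    (forall l j, order_cone (v l j)) /\
    forall i, th i = \sum_(l < r) outer (v l) i.

Definition N_fin (th : tensor) : Prop := exists r, N_le r th.

Definition frob2 (T th : tensor) : R := \sum_(i : tidx) (T i - th i) ^+ 2.

Definition minimizer_over (S : tensor -> Prop) (T th0 : tensor) : Prop :=
  S th0 /\ forall th, S th -> frob2 T th0 <= frob2 T th.

End Tensors.

(** The first claim holds because [N_le r] is contained in [rank_le r].

For the second, write the rank-two matrix as M(x, y) = a(x)·b(y) with
a, b valued in R^2.  Membership in N_{<∞} makes every column M(·, y) and
every increment M(·, y') - M(·, y), y <= y', an element of the order cone
of P_1.  When the a(x) span R^2, each such column is a(·)·g for g in the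
finite set G of values and increments of b, and the functional
k = Σ_x a(x) is positive on G \ {0}.  So G \ {0} lies in an open
half-plane, and G in the cone spanned by its two elements e, f of extreme
slope, with coordinates g = λ(g) e + μ(g) f given by linear functionals
λ, μ that are nonnegative on G.  Hence M = (a·e) ⊗ (λ∘b) + (a·f) ⊗ (μ∘b),
where a·e, a·f are columns or increments and the increments of λ∘b, μ∘b
are values of λ, μ on G.  When the a(x) are collinear, M has rank one and
M = M(·, y0) ⊗ M(x0, ·) / M(x0, y0). *)

From Pilot Require Import Defs.
From mathcomp Require Import all_boot all_order all_algebra.
From mathcomp Require Import reals.
From mathcomp Require Import ring.
From Stdlib Require Import Classical.
Set Implicit Arguments. Unset Strict Implicit. Unset Printing Implicit Defensive.
Import Order.TTheory GRing.Theory Num.Theory.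
Local Open Scope ring_scope.

Section PlaneVectors.
Variable R : comNzRingType.
Implicit Types u v w c e f k : R * R.

Definition dot2 u v := u.1 * v.1 + u.2 * v.2.
Definition det2 u v := u.1 * v.2 - u.2 * v.1.

Lemma dot2C u v : dot2 u v = dot2 v u.
Proof. by rewrite /dot2 mulrC [u.2 * _]mulrC. Qed.

Lemma dot2_0r u : dot2 u 0 = 0.
Proof. by rewrite /dot2 /= !mulr0 addr0. Qed.

Lemma dot2_0l u : dot2 0 u = 0.
Proof. by rewrite dot2C dot2_0r. Qed.

Lemma dot2rB w u v : dot2 w (u - v) = dot2 w u - dot2 w v.
Proof. by rewrite /dot2 /=; ring. Qed.

Lemma det2_0r u : det2 u 0 = 0.
Proof. by rewrite /det2 /= !mulr0 subrr. Qed.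

Lemma det2_0l u : det2 0 u = 0.
Proof. by rewrite /det2 /= !mul0r subrr. Qed.

Lemma det2_dot2 k u v :
  det2 u v * dot2 k k = dot2 k u * det2 k v - det2 k u * dot2 k v.
Proof. by rewrite /det2 /dot2; ring. Qed.

Lemma dot2_cramer e f v w :
  det2 e f * dot2 w v = det2 v f * dot2 w e + det2 e v * dot2 w f.
Proof. by rewrite /det2 /dot2; ring. Qed.

Lemma dot2_parallel k e v w :
  dot2 k e * dot2 w v = dot2 k v * dot2 w e + det2 e v * det2 k w.
Proof. by rewrite /det2 /dot2; ring. Qed.

Lemma dot2_rank1 c u v :
  dot2 c c * dot2 u v = dot2 c u * dot2 c v + det2 c u * det2 c v.
Proof. by rewrite /det2 /dot2; ring. Qed.

End PlaneVectors.

Lemma dot2_self_gt0 (R : realDomainType) (c : R * R) : c != 0 -> 0 < dot2 c c.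
Proof.
case: c => c1 c2 c_neq0; rewrite /dot2 /= -!expr2 lt_def addr_ge0 ?sqr_ge0 //.
by rewrite paddr_eq0 ?sqr_ge0 // !sqrf_eq0 andbT -xpair_eqE.
Qed.

Section TwoRays.
Variables (R : realFieldType) (I : finType) (g : I -> R * R).

Definition two_ray_coords (e f : R * R) :=
  exists l m : R * R,
    [/\ forall i, 0 <= dot2 l (g i), forall i, 0 <= dot2 m (g i) &
        forall i w, dot2 w (g i) = dot2 l (g i) * dot2 w e + dot2 m (g i) * dot2 w f].

Lemma two_ray_coords0 : (forall i, g i = 0) -> two_ray_coords 0 0.
Proof.
move=> g0; exists 0, 0; split=> [i|i|i w]; rewrite ?dot2_0l //.
by rewrite g0 !dot2_0r mulr0 addr0.
Qed.

Lemma two_ray_coords_cramer e f : 0 < det2 e f ->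
  (forall i, 0 <= det2 e (g i)) -> (forall i, 0 <= det2 (g i) f) ->
  two_ray_coords e f.
Proof.
set D := det2 e f => D_gt0 e_g g_f.
have D_neq0 : D != 0 by rewrite gt_eqF.
exists (f.2 / D, - f.1 / D), (- e.2 / D, e.1 / D).
have l_det v : dot2 (f.2 / D, - f.1 / D) v = det2 v f / D.
  by rewrite /dot2 /det2 /=; field.
have m_det v : dot2 (- e.2 / D, e.1 / D) v = det2 e v / D.
  by rewrite /dot2 /det2 /=; field.
split=> [i|i|i w]; rewrite ?l_det ?m_det ?divr_ge0 ?(ltW D_gt0) //.
by apply: (mulfI D_neq0); rewrite dot2_cramer -/D; field.
Qed.

Lemma two_ray_coords_parallel k e : 0 < dot2 k e ->
  (forall i, 0 <= dot2 k (g i)) -> (forall i, det2 e (g i) = 0) ->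
  two_ray_coords e 0.
Proof.
set c := dot2 k e => c_gt0 k_g e_g.
have c_neq0 : c != 0 by rewrite gt_eqF.
exists (k.1 / c, k.2 / c), 0.
have l_dot v : dot2 (k.1 / c, k.2 / c) v = dot2 k v / c.
  by rewrite /dot2 /=; field.
split=> [i|i|i w]; rewrite ?l_dot ?dot2_0l ?divr_ge0 ?(ltW c_gt0) //.
apply: (mulfI c_neq0); rewrite dot2_parallel e_g dot2_0r.
by rewrite !mul0r !addr0; field.
Qed.

End TwoRays.

Section PlanarCone.
Variables (R : realFieldType) (I : finType) (g : I -> R * R) (k : R * R).
Hypothesis k_pos : forall i, g i != 0 -> 0 < dot2 k (g i).

Let slope i := det2 k (g i) / dot2 k (g i).

Lemma det2_slope i j : g i != 0 -> g j != 0 ->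
  det2 (g i) (g j) * dot2 k k = dot2 k (g i) * dot2 k (g j) * (slope j - slope i).
Proof.
move=> /k_pos/lt0r_neq0 ki /k_pos/lt0r_neq0 kj.
by rewrite det2_dot2 /slope; field; apply/andP.
Qed.

Lemma k_neq0 i : g i != 0 -> k != 0.
Proof. by move=> /k_pos; apply: contraTneq => ->; rewrite dot2_0l ltxx. Qed.

Lemma det2_ge0_slope i j : g i != 0 -> g j != 0 ->
  (0 <= det2 (g i) (g j)) = (slope i <= slope j).
Proof.
move=> gi gj; rewrite -(pmulr_lge0 _ (dot2_self_gt0 (k_neq0 gi))) det2_slope //.
by rewrite pmulr_rge0 ?subr_ge0 // mulr_gt0 ?k_pos.
Qed.

Lemma planar_cone_two_rays :
  exists e f, [/\ e = 0 \/ (exists i, e = g i), f = 0 \/ (exists i, f = g i)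
                & two_ray_coords g e f].
Proof.
have [i0 gi0|g0] := pickP (fun i => g i != 0); last first.
  exists 0, 0; split; [by left | by left |].
  by apply: two_ray_coords0 => i; apply/eqP/negbFE/g0.
have [ie gie slope_min] := arg_minP slope (gi0 : (fun i => g i != 0) i0).
have [jf gjf slope_max] := arg_maxP slope (gi0 : (fun i => g i != 0) i0).
have det_min i : 0 <= det2 (g ie) (g i).
  have [->|gi] := eqVneq (g i) 0; first by rewrite det2_0r.
  by rewrite det2_ge0_slope // slope_min.
have det_max i : 0 <= det2 (g i) (g jf).
  have [->|gi] := eqVneq (g i) 0; first by rewrite det2_0l.
  by rewrite det2_ge0_slope //; apply: slope_max.
have [D_gt0|D_le0] := ltP 0 (det2 (g ie) (g jf)).
  exists (g ie), (g jf); split; [by right; exists ie | by right; exists jf |].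
  exact: two_ray_coords_cramer.
have slope_ie i : g i != 0 -> slope i = slope ie.
  have D0 : det2 (g ie) (g jf) = 0 by apply/eqP; rewrite eq_le D_le0 det_min.
  have := det2_slope gie gjf; rewrite D0 mul0r => /esym/eqP.
  rewrite mulf_eq0 gt_eqF ?mulr_gt0 ?k_pos //= subr_eq0 => /eqP slope_eq gi.
  by apply/eqP; rewrite eq_le slope_min // -slope_eq andbT; apply: slope_max.
exists (g ie), 0; split; [by right; exists ie | by left |].
apply: two_ray_coords_parallel (k_pos gie) _ _ => i.
  by have [->|/k_pos/ltW] := eqVneq (g i) 0; rewrite ?dot2_0r.
have [->|gi] := eqVneq (g i) 0; first by rewrite det2_0r.
apply/eqP; rewrite -(mulIr_eq0 _ (mulIf (lt0r_neq0 (dot2_self_gt0 (k_neq0 gi))))).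
by rewrite det2_slope // slope_ie // subrr mulr0.
Qed.

End PlanarCone.
Section OrderCone.
Variables (R : realFieldType) (dX : Order.disp_t) (X : finPOrderType dX).
Implicit Types f h : X -> R.

(* Definitionally [order_cone] of Defs, for an arbitrary finite poset. *)
Definition cone f := (forall x, 0 <= f x) /\ (forall x y, (x <= y)%O -> f x <= f y).

Lemma cone0 : cone (fun=> 0).
Proof. by split=> *; rewrite lexx. Qed.

Lemma eq_cone f h : f =1 h -> cone f -> cone h.
Proof.
move=> fh [f_ge0 f_mono].
by split=> [x|x y]; rewrite -!fh; [apply: f_ge0 | apply: f_mono].
Qed.

Lemma coneMr f c : 0 <= c -> cone f -> cone (fun x => f x * c).
Proof.
move=> c_ge0 [f_ge0 f_mono]; split=> [x|x y xy]; first exact: mulr_ge0.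
exact: ler_wpM2r (f_mono _ _ xy).
Qed.

Lemma cone_sum (J : finType) (F : J -> X -> R) :
  (forall l, cone (F l)) -> cone (fun x => \sum_l F l x).
Proof.
move=> F_cone; split=> [x|x y xy]; first by apply: sumr_ge0 => l _; apply: (F_cone l).1.
by apply: ler_sum => l _; apply: (F_cone l).2.
Qed.

End OrderCone.

Section Bicone.
Variables (R : realFieldType) (dX dY : Order.disp_t).
Variables (X : finPOrderType dX) (Y : finPOrderType dY).
Implicit Types M N : X -> Y -> R.

Definition bicone M :=
  (forall y, cone (M^~ y)) /\
  (forall y y', (y <= y')%O -> cone (fun x => M x y' - M x y)).

Lemma eq_bicone M N : (forall x y, M x y = N x y) -> bicone M -> bicone N.
Proof.
move=> MN [M_col M_inc]; split=> [y|y y' yy'].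
  by apply: eq_cone (M_col y) => x; rewrite MN.
by apply: eq_cone (M_inc _ _ yy') => x; rewrite !MN.
Qed.

Lemma bicone_outer (u : X -> R) (z : Y -> R) :
  cone u -> cone z -> bicone (fun x y => u x * z y).
Proof.
move=> u_cone [z_ge0 z_mono]; split=> [y|y y' yy']; first exact: coneMr.
have z_inc : 0 <= z y' - z y by rewrite subr_ge0 z_mono.
by apply: eq_cone (coneMr z_inc u_cone) => x; rewrite mulrBr.
Qed.

Lemma bicone_sum (J : finType) (F : J -> X -> Y -> R) :
  (forall l, bicone (F l)) -> bicone (fun x y => \sum_l F l x y).
Proof.
move=> F_bicone; split=> [y|y y' yy'].
  by apply: cone_sum => l; apply: (F_bicone l).1.
apply: eq_cone (cone_sum (fun l => (F_bicone l).2 _ _ yy')) => x.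
by rewrite sumrB.
Qed.

Definition increments (V : zmodType) (b : Y -> V) (i : option Y * Y) : V :=
  if i.1 is Some y then (if (y <= i.2)%O then b i.2 - b y else 0) else b i.2.

Lemma cone_increments (z : Y -> R) : (forall i, 0 <= increments z i) -> cone z.
Proof.
move=> z_inc; split=> [y|y y' yy']; first exact: (z_inc (None, y)).
by have := z_inc (Some y, y'); rewrite /increments /= yy' subr_ge0.
Qed.

Lemma bicone_increments M : bicone M -> forall i, cone (fun x => increments (M x) i).
Proof.
move=> [M_col M_inc] [[y|] y']; last exact: (M_col y').
by rewrite /increments /=; case: (boolP (y <= y')%O) => [/M_inc|_] //; apply: cone0.
Qed.

Lemma increments_dot2 (c : R * R) (b : Y -> R * R) i :
  increments (fun y => dot2 c (b y)) i = dot2 c (increments b i).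
Proof.
by case: i => [[y|] y'] //; rewrite /increments /=; case: ifP; rewrite ?dot2rB ?dot2_0r.
Qed.

End Bicone.

Section BiconeFactorization.
Variables (R : realFieldType) (dX dY : Order.disp_t).
Variables (X : finPOrderType dX) (Y : finPOrderType dY).

Lemma bicone_rank1 (M : X -> Y -> R) (a : X -> R) (b : Y -> R) :
  bicone M -> (forall x y, M x y = a x * b y) ->
  exists u z, [/\ cone u, cone z & forall x y, M x y = u x * z y].
Proof.
move=> [M_col M_inc] Mab.
have [[x0 y0] /= M0|M_0] := pickP (fun p : X * Y => M p.1 p.2 != 0); last first.
  exists (fun=> 0), (fun=> 0); split; try exact: cone0.
  by move=> x y; move/negbFE/eqP: (M_0 (x, y)) => ->; rewrite mulr0.
have M0_gt0 : 0 < M x0 y0 by rewrite lt_def M0 (M_col y0).1.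
have M_ratio x y : M x y = M x y0 * (M x0 y / M x0 y0).
  apply: (mulIf (lt0r_neq0 M0_gt0)); rewrite mulrA divfK ?lt0r_neq0 //.
  by rewrite !Mab; ring.
exists (M^~ y0), (fun y => M x0 y / M x0 y0); split=> //.
split=> [y|y y' yy']; first by rewrite divr_ge0 ?(M_col y).1 ?ltW.
by rewrite ler_pM2r ?invr_gt0 // -subr_ge0 ((M_inc _ _ yy').1 x0).
Qed.

Definition cone_rank_le2 (M : X -> Y -> R) :=
  exists u1 u2 z1 z2, [/\ cone u1, cone u2, cone z1, cone z2 &
    forall x y, M x y = u1 x * z1 y + u2 x * z2 y].

Lemma bicone_dot2_injective (M : X -> Y -> R) (a : X -> R * R) (b : Y -> R * R) :
  (forall c, (forall x, dot2 (a x) c = 0) -> c = 0) ->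
  bicone M -> (forall x y, M x y = dot2 (a x) (b y)) -> cone_rank_le2 M.
Proof.
move=> a_inj M_bicone M_ab; pose g := increments b.
have g_cone i : cone (fun x => dot2 (a x) (g i)).
  apply: eq_cone (bicone_increments (eq_bicone M_ab M_bicone) i) => x.
  by rewrite increments_dot2.
pose k := (\sum_x (a x).1, \sum_x (a x).2).
have k_pos i : g i != 0 -> 0 < dot2 k (g i).
  have k_sum : dot2 k (g i) = \sum_x dot2 (a x) (g i).
    by rewrite /dot2 /= !mulr_suml -big_split.
  rewrite k_sum lt_def sumr_ge0 ?andbT => [gi|x _]; last exact: (g_cone i).1.
  apply: contra gi => /eqP/psumr_eq0P sum0; apply/eqP/a_inj => x.
  by apply: sum0 => // y _; apply: (g_cone i).1.
have [e [f [e_dir f_dir [l [m [l_ge0 m_ge0 g_dec]]]]]] := planar_cone_two_rays k_pos.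
have dir_cone c : c = 0 \/ (exists i, c = g i) -> cone (fun x => dot2 (a x) c).
  case=> [->|[i ->]]; last exact: g_cone.
  by apply: eq_cone (@cone0 _ _ X) => x; rewrite dot2_0r.
have coef_cone c : (forall i, 0 <= dot2 c (g i)) -> cone (fun y => dot2 c (b y)).
  by move=> c_ge0; apply: cone_increments => i; rewrite increments_dot2.
exists (fun x => dot2 (a x) e), (fun x => dot2 (a x) f),
  (fun y => dot2 l (b y)), (fun y => dot2 m (b y)).
split; [exact: dir_cone | exact: dir_cone | exact: coef_cone | exact: coef_cone |].
by move=> x y; rewrite M_ab (g_dec (None, y)) mulrC [_ * dot2 m _]mulrC.
Qed.

Lemma bicone_dot2_factor (M : X -> Y -> R) (a : X -> R * R) (b : Y -> R * R) :
  bicone M -> (forall x y, M x y = dot2 (a x) (b y)) -> cone_rank_le2 M.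
Proof.
move=> M_bicone M_ab.
have [[c [c_neq0 ac0]]|a_inj] :=
  classic (exists c, c != 0 /\ forall x, dot2 (a x) c = 0); last first.
  apply: bicone_dot2_injective M_bicone M_ab => c ac0.
  by apply/eqP/negPn/negP => c_neq0; apply: a_inj; exists c.
have cc_neq0 := lt0r_neq0 (dot2_self_gt0 c_neq0).
have M_rank1 x y : M x y = det2 c (a x) * (det2 c (b y) / dot2 c c).
  apply: (mulfI cc_neq0); rewrite M_ab dot2_rank1 dot2C ac0 mul0r add0r.
  by field.
have [u [z [u_cone z_cone M_uz]]] := bicone_rank1 M_bicone M_rank1.
exists u, (fun=> 0), z, (fun=> 0); split=> //; try exact: cone0.
by move=> x y; rewrite M_uz mulr0 addr0.
Qed.

End BiconeFactorization.

Lemma big_ord2 (T : Type) (idx : T) (op : Monoid.law idx) (F : 'I_2 -> T) :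
  \big[op/idx]_(j < 2) F j = op (F ord0) (F ord_max).
Proof. by rewrite big_ord_recl big_ord1; congr (op _ (F _)); apply: val_inj. Qed.

Lemma ord2_neq0 (j : 'I_2) : j != ord0 -> ord_max = j.
Proof. by case: j => [[|[|j]] //= lt_j2] _; apply: val_inj. Qed.

Definition dfun2 (Q : 'I_2 -> Type) (q0 : Q ord0) (q1 : Q ord_max) (j : 'I_2) : Q j :=
  match eqVneq j ord0 with
  | EqNotNeq e => eq_rect ord0 Q q0 j (esym e)
  | NeqNotEq ne => eq_rect ord_max Q q1 j (ord2_neq0 ne)
  end.

Lemma dfun2_0 Q q0 q1 : @dfun2 Q q0 q1 ord0 = q0.
Proof.
by rewrite /dfun2; case: eqVneq => // e; rewrite (eq_irrelevance (esym e) erefl).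
Qed.

Lemma dfun2_max Q q0 q1 : @dfun2 Q q0 q1 ord_max = q1.
Proof.
rewrite /dfun2; case: eqVneq => // ne.
by rewrite (eq_irrelevance (ord2_neq0 ne) erefl).
Qed.

Lemma dfun2P (Q : 'I_2 -> Type) (S : forall j, Q j -> Prop) q0 q1 :
  S ord0 q0 -> S ord_max q1 -> forall j, S j (@dfun2 Q q0 q1 j).
Proof.
move=> S0 S1 j; rewrite /dfun2; case: eqVneq => [e|ne]; first by subst j.
by move: (ord2_neq0 ne) => p; case: j / p ne.
Qed.

Lemma N_le_rank_le (R : realType) (k : nat) (d : 'I_k -> Order.disp_t)
    (P : forall j : 'I_k, finPOrderType (d j)) r (th : tensor R P) :
  N_le r th -> rank_le r th.
Proof. by case=> v [_ th_v]; exists r; split=> //; exists v. Qed.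

Section Matrices.
Variables (R : realType) (d : 'I_2 -> Order.disp_t).
Variable P : forall j : 'I_2, finPOrderType (d j).

Definition idx2 (x : P ord0) (y : P ord_max) : tidx P :=
  finfun (@dfun2 (fun j => P j) x y).

Definition tensor_mx (th : tensor R P) x y := th (idx2 x y).

Lemma tensor_mx_idx2 (th : tensor R P) i :
  th i = tensor_mx th (i ord0) (i ord_max).
Proof.
congr th; apply/ffunP => j; rewrite ffunE.
by apply: (dfun2P (S := fun j q => i j = q)).
Qed.

Lemma outer2 (v : forall j, P j -> R) i :
  outer v i = v ord0 (i ord0) * v ord_max (i ord_max).
Proof. by rewrite /outer big_ord2. Qed.

Lemma tensor_mx_outer (v : forall j, P j -> R) x y :
  outer v (idx2 x y) = v ord0 x * v ord_max y.
Proof. by rewrite outer2 /idx2 !ffunE dfun2_0 dfun2_max. Qed.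

Lemma N_fin_bicone (th : tensor R P) : N_fin th -> bicone (tensor_mx th).
Proof.
case=> r [v [v_cone th_v]].
apply: eq_bicone (bicone_sum (fun l => bicone_outer (v_cone l ord0) (v_cone l ord_max))).
by move=> x y; rewrite /tensor_mx th_v; apply: eq_bigr => l _; rewrite tensor_mx_outer.
Qed.

Lemma rank_le2_dot2 (th : tensor R P) : rank_le 2 th ->
  exists a b, forall x y, tensor_mx th x y = dot2 (a x) (b y).
Proof.
case=> s [s_le2 [w th_w]]; case: s s_le2 w th_w => [|[|[|s]]] // _ w th_w.
- exists (fun=> 0), (fun=> 0) => x y.
  by rewrite /tensor_mx th_w big_ord0 dot2_0r.
- exists (fun x => (w ord0 ord0 x, 0)), (fun y => (w ord0 ord_max y, 0)) => x y.
  by rewrite /tensor_mx th_w big_ord1 tensor_mx_outer /dot2 /= mulr0 addr0.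
- exists (fun x => (w ord0 ord0 x, w ord_max ord0 x)).
  exists (fun y => (w ord0 ord_max y, w ord_max ord_max y)) => x y.
  by rewrite /tensor_mx th_w big_ord2 !tensor_mx_outer.
Qed.

Lemma cone_rank_le2_N_le2 (th : tensor R P) :
  cone_rank_le2 (tensor_mx th) -> N_le 2 th.
Proof.
case=> [u1 [u2 [z1 [z2 [u1_cone u2_cone z1_cone z2_cone th_uz]]]]].
exists (fun l : 'I_2 => if l == ord0 then @dfun2 (fun j => P j -> R) u1 z1
                        else @dfun2 (fun j => P j -> R) u2 z2).
split=> [l|i].
  by case: (l == ord0); apply: (dfun2P (S := fun j f => order_cone f)).
by rewrite tensor_mx_idx2 th_uz big_ord2 /= !outer2 !dfun2_0 !dfun2_max.
Qed.

End Matrices.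

Theorem lemma11 (R : realType) (k : nat) (d : 'I_k -> Order.disp_t)
    (P : forall j : 'I_k, finPOrderType (d j)) (T : tensor R P) :
  (forall (r : nat) (Tr : tensor R P),
      minimizer_over (rank_le (P := P) r) T Tr ->
      N_le r Tr ->
      minimizer_over (N_le (P := P) r) T Tr) /\
  (k = 2%N ->
   forall T2 : tensor R P,
      minimizer_over (rank_le (P := P) 2) T T2 ->
      N_fin T2 ->
      minimizer_over (N_le (P := P) 2) T T2).
Proof.
split=> [r Tr [_ Tr_min] Tr_N|k2].
  by split=> // th /N_le_rank_le; apply: Tr_min.
subst k => T2 [T2_rank T2_min] T2_N.
suff T2_N2 : N_le 2 T2 by split=> // th /N_le_rank_le; apply: T2_min.
have [a [b T2_ab]] := rank_le2_dot2 T2_rank.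
exact: cone_rank_le2_N_le2 (bicone_dot2_factor (N_fin_bicone T2_N) T2_ab).
Qed.
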